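(* Let $\mathrm{k}\in\{\mathbb{R},\mathbb{C}\}$ and let $\mathcal{A}$ be a commutative unital Banach algebra over $\mathrm{k}$ whose only finite-dimensional subalgebra is $\mathrm{k}$. Then for all finite subsets $A,B$ of $\mathcal{A}$ with $\mathrm{k}\langle A\rangle\cap U(\mathcal{A})\neq\emptyset$ and $\mathrm{k}\langle B\rangle\cap U(\mathcal{A})\neq\emptyset$, $\dim_{\mathrm{k}}(AB)\geq\dim_{\mathrm{k}}(A)+\dim_{\mathrm{k}}(B)-1$.
   Context: Subalgebras contain $1$. $U(\mathcal{A})$ is the group of invertible elements, $\mathrm{k}\langle S\rangle$ the linear span of $S$, $\dim_{\mathrm{k}}(S)=\dim_{\mathrm{k}}\mathrm{k}\langle S\rangle$, and $AB=\{ab\mid a\in A,b\in B\}$. *)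

From HB Require Import structures.
From mathcomp Require Import all_boot all_order all_algebra.
From mathcomp Require Import all_classical all_reals all_analysis.
From mathcomp.real_closed Require Import complex.
Set Implicit Arguments. Unset Strict Implicit. Unset Printing Implicit Defensive.
Import Order.TTheory GRing.Theory Num.Theory.
Import numFieldNormedType.Exports.
Local Open Scope ring_scope.
Local Open Scope classical_set_scope.

Record comBanachAlg (K : numFieldType) (V : completeNormedModType K) := ComBanachAlg {
  bmul : V -> V -> V;
  bone : V;
  bmulA : forall x y z, bmul x (bmul y z) = bmul (bmul x y) z;
  bmulC : forall x y, bmul x y = bmul y x;
  bmul1 : forall x, bmul bone x = x;
  bmulDl : forall x y z, bmul (x + y) z = bmul x z + bmul y z;
  bmulZl : forall (a : K) x y, bmul (a *: x) y = a *: bmul x y;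
  bnorm_mul : forall x y, `|bmul x y| <= `|x| * `|y|;
  bnorm_one : `|bone| = 1
}.

Section Defs.
Variables (K : numFieldType) (V : lmodType K).

Definition kspan (S : seq V) : set V :=
  [set v | exists c : 'I_(size S) -> K, v = \sum_(i < size S) c i *: S`_i].

Definition lin_indep (S : seq V) : Prop :=
  forall c : 'I_(size S) -> K, \sum_(i < size S) c i *: S`_i = 0 -> forall i, c i = 0.

Definition has_dim (X : set V) (n : nat) : Prop :=
  exists b : seq V, [/\ size b = n, lin_indep b & kspan b = X].

Definition vdim (X : set V) : nat := xget 0%N (has_dim X).

Definition dimk (S : seq V) : nat := vdim (kspan S).

End Defs.

Section AlgDefs.
Variables (K : numFieldType) (V : completeNormedModType K) (M : comBanachAlg V).
Local Notation "x * y" := (bmul M x y).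
Local Notation "1" := (bone M).

Definition is_unit (x : V) : Prop := exists y : V, x * y = 1.

Definition subalgebra (S : set V) : Prop :=
  [/\ S 1, (forall x y, S x -> S y -> S (x + y)),
      (forall (a : K) x, S x -> S (a *: x)) & (forall x y, S x -> S y -> S (x * y))].

Definition fin_dim (S : set V) : Prop := exists s : seq V, kspan s = S.

Definition only_fd_subalg_is_k : Prop :=
  forall S : set V, subalgebra S -> fin_dim S -> S = kspan [:: 1].

Definition prodset (A B : seq V) : seq V := [seq a * b | a <- A, b <- B].

End AlgDefs.

From HB Require Import structures.
From mathcomp Require Import all_boot all_order all_algebra.
From mathcomp Require Import all_classical all_reals all_analysis.
From mathcomp.real_closed Require Import complex.
From mathcomp Require Import zify.
Set Implicit Arguments. Unset Strict Implicit. Unset Printing Implicit Defensive.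
Import Order.TTheory GRing.Theory Num.Theory.
Local Open Scope ring_scope.
Local Open Scope classical_set_scope.
Local Open Scope complex_scope.

(* Multiplying A and B by inverses of units lying in their spans preserves all
   three dimensions, so we may assume 1 is in X = k<A> and in Y = k<B>; we then
   induct on dim Y, writing P = k<AB>.
   If XY is contained in X, the stabiliser {h | hX in X} is a subalgebra lying
   in X (as 1 is in X), hence finite-dimensional, hence equal to k; so Y is in
   k, dim Y <= 1, and X = X1 is in P.
   Otherwise some a in X has aY not in X. Then Y' = {y in Y | ay in X} is a
   proper subspace of Y containing 1, and if z completes a basis of Y' to one
   of Y, the family az is independent modulo X. The pair X' = X + k<az>, Y'
   satisfies dim X' + dim Y' = dim X + dim Y and X'Y' in P, so the induction
   hypothesis for it gives the bound. *)

(* Coefficients are indexed by nat; those beyond size s are ignored. *)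
Definition lcomb (K : numFieldType) (V : lmodType K) (c : nat -> K) (s : seq V) : V :=
  \sum_(i < size s) c i *: s`_i.

Section LinearAlgebra.
Variables (K : numFieldType) (V : lmodType K).
Implicit Types (x y : V) (s t z : seq V) (X Y Z : set V).

Definition subspace X := [/\ X 0, (forall x y, X x -> X y -> X (x + y)) &
  (forall (a : K) x, X x -> X (a *: x))].

Definition lspan s : set V := [set x | exists c, x = lcomb c s].

Definition sum_span Z s : set V := [set x | exists c, Z (x - lcomb c s)].

Definition indep_mod Z s :=
  forall c, Z (lcomb c s) -> forall i, (i < size s)%N -> c i = 0.

Lemma lcomb_nil c : lcomb c ([::] : seq V) = 0.
Proof. by rewrite /lcomb big_ord0. Qed.

Lemma lcomb_cons c y s : lcomb c (y :: s) = c 0%N *: y + lcomb (fun i => c i.+1) s.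
Proof. by rewrite /lcomb /= big_ord_recl. Qed.

Lemma lcomb_seq1 c y : lcomb c [:: y] = c 0%N *: y.
Proof. by rewrite /lcomb /= big_ord1. Qed.

Lemma lcomb0 s : lcomb (fun=> 0) s = 0.
Proof. by rewrite /lcomb big1 // => i _; rewrite scale0r. Qed.

Lemma lcombD c d s : lcomb c s + lcomb d s = lcomb (fun i => c i + d i) s.
Proof. by rewrite /lcomb -big_split; apply: eq_bigr => i _; rewrite scalerDl. Qed.

Lemma lcombZ a c s : a *: lcomb c s = lcomb (fun i => a * c i) s.
Proof. by rewrite /lcomb scaler_sumr; apply: eq_bigr => i _; rewrite scalerA. Qed.

Lemma lcombN c s : - lcomb c s = lcomb (fun i => - c i) s.
Proof. by rewrite -scaleN1r lcombZ; congr lcomb; apply/funext => i; rewrite mulN1r. Qed.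

Lemma eq_lcomb c d s : (forall i, (i < size s)%N -> c i = d i) -> lcomb c s = lcomb d s.
Proof. by move=> h; apply: eq_bigr => i _; rewrite h. Qed.

Lemma lcomb_map (W : lmodType K) (f : V -> W) c s :
  (forall x y, f (x + y) = f x + f y) -> (forall (a : K) x, f (a *: x) = a *: f x) ->
  f (lcomb c s) = lcomb c (map f s).
Proof.
move=> fD fZ; have f0 : f 0 = 0 by rewrite -(scale0r 0) fZ scale0r.
rewrite /lcomb (big_morph f fD f0) size_map; apply: eq_bigr => i _.
by rewrite fZ (nth_map 0).
Qed.

Lemma kspanE s : kspan s = lspan s.
Proof.
apply/funext => x; apply/propext; split=> [[c ->]|[c ->]]; last by exists (fun i => c i).
exists (fun k => if insub k is Some i then c i else 0).
by apply: eq_bigr => i _; rewrite valK.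
Qed.

Lemma lin_indepE s : lin_indep s <-> indep_mod [set 0] s.
Proof.
split=> [h c hc i lti|h c hc i]; first exact: (h (fun k => c k) hc (Ordinal lti)).
have := h (fun k => if insub k is Some j then c j else 0) _ i (ltn_ord i).
rewrite valK; apply; change (lcomb (fun k => if insub k is Some j then c j else 0) s = 0).
by rewrite -[RHS]hc; apply: eq_bigr => j _; rewrite valK.
Qed.

Lemma subspace0 : subspace [set 0].
Proof. by split=> [//|x y -> ->|a x ->]; rewrite ?addr0 ?scaler0. Qed.

Lemma subspace_lcomb X c s :
  subspace X -> (forall i, (i < size s)%N -> X s`_i) -> X (lcomb c s).
Proof. by case=> X0 XD XZ hs; rewrite /lcomb; elim/big_ind: _ => // i _; exact/XZ/hs. Qed.

Lemma subspace_lspan s : subspace (lspan s).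
Proof.
split; first by exists (fun=> 0); rewrite lcomb0.
  by move=> x y [c ->] [d ->]; exists (fun i => c i + d i); rewrite lcombD.
by move=> a x [c ->]; exists (fun i => a * c i); rewrite lcombZ.
Qed.

Lemma lspan_nth s i : (i < size s)%N -> lspan s s`_i.
Proof.
move=> hi; exists (fun k => (k == i)%:R); rewrite /lcomb (bigD1 (Ordinal hi)) //=.
rewrite eqxx scale1r big1 ?addr0 // => j hj.
by rewrite (_ : (nat_of_ord j == i) = false) ?scale0r //; apply/negbTE;
  move: hj; apply: contra => /eqP h; apply/eqP/val_inj.
Qed.

Lemma lspan_mem s x : x \in s -> lspan s x.
Proof. by move=> hx; rewrite -(nth_index 0 hx); apply: lspan_nth; rewrite index_mem. Qed.

Lemma lspan_sub X s : subspace X -> (forall i, (i < size s)%N -> X s`_i) -> lspan s `<=` X.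
Proof. by move=> hX hs x [c ->]; apply: subspace_lcomb. Qed.

Lemma lspan_map (f : V -> V) s x :
  (forall x y, f (x + y) = f x + f y) -> (forall (a : K) x, f (a *: x) = a *: f x) ->
  lspan (map f s) x <-> exists2 y, lspan s y & x = f y.
Proof.
move=> fD fZ; split=> [[c ->]|[y [c ->] ->]]; last by exists c; rewrite lcomb_map.
by exists (lcomb c s); [exists c|rewrite lcomb_map].
Qed.

(* Steinitz: a longer family has a coordinate matrix with more rows than
   columns, and a nonzero kernel vector of it is a vanishing combination. *)
Lemma size_indep_le s t : indep_mod [set 0] t ->
  (forall j, (j < size t)%N -> lspan s t`_j) -> (size t <= size s)%N.
Proof.
move=> ht hs; rewrite leqNgt; apply/negP => lt.
have /choice [F hF] : forall j, exists c, (j < size t)%N -> t`_j = lcomb c s.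
  move=> j; case: (ltnP j (size t)) => hj; last by exists (fun=> 0).
  by have [c hc] := hs j hj; exists c.
pose Mx : 'M[K]_(size t, size s) := \matrix_(j, i) F j i.
have kn0 : kermx Mx != 0.
  apply/eqP => k0; have := mxrank_ker Mx; rewrite k0 mxrank0 => /esym/eqP.
  rewrite subn_eq0 => h; have := leq_trans h (rank_leq_col Mx).
  by rewrite leqNgt lt.
have [r wn0] : exists r, row r (kermx Mx) != 0.
  apply: contrapT => hall; move/negP: kn0; apply; apply/eqP/row_matrixP => r.
  by rewrite row0; apply: contrapT => /eqP h; apply: hall; exists r.
set w := row r (kermx Mx) in wn0.
have w0 : w *m Mx = 0 by rewrite /w -row_mul mulmx_ker row0.
pose c j := if insub j is Some jj then w 0 jj else 0.
have : lcomb c t = 0.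
  rewrite /lcomb; transitivity (\sum_(j < size t) \sum_(i < size s) (w 0 j * F j i) *: s`_i).
    apply: eq_bigr => j _; rewrite /c valK (hF j (ltn_ord j)) /lcomb scaler_sumr.
    by apply: eq_bigr => i _; rewrite scalerA.
  rewrite exchange_big /=; apply: big1 => i _; rewrite -scaler_suml.
  suff -> : \sum_(j < size t) w 0 j * F j i = 0 by rewrite scale0r.
  have := congr1 (fun N : 'M[K]_(1, size s) => N 0 i) w0; rewrite !mxE => h.
  by rewrite -[RHS]h; apply: eq_bigr => j _; rewrite /Mx !mxE.
move/ht => hc; move/negP: wn0; apply; apply/eqP/rowP => j.
by rewrite [RHS]mxE; have := hc j (ltn_ord j); rewrite /c valK.
Qed.

Lemma subspace_sum_span Z s : subspace Z -> subspace (sum_span Z s).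
Proof.
case=> Z0 ZD ZZ; split.
- by exists (fun=> 0); rewrite lcomb0 subr0.
- move=> x y [c hc] [d hd]; exists (fun i => c i + d i); rewrite -lcombD.
  by rewrite opprD addrACA; apply: ZD.
- by move=> a x [c hc]; exists (fun i => a * c i); rewrite -lcombZ -scalerBr; apply: ZZ.
Qed.

Lemma sum_span_ge Z s : Z `<=` sum_span Z s.
Proof. by move=> x hx; exists (fun=> 0); rewrite lcomb0 subr0. Qed.

Lemma sum_span0 s : sum_span [set 0] s = lspan s.
Proof.
apply/funext => x; apply/propext; split=> [[c /= /eqP]|[c ->]].
  by rewrite subr_eq0 => /eqP ->; exists c.
by exists c; rewrite /= subrr.
Qed.

Lemma sum_span_nil Z : sum_span Z [::] = Z.
Proof.
apply/seteqP; split; last exact: sum_span_ge.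
by move=> x [c]; rewrite lcomb_nil subr0.
Qed.

Lemma sum_span_cons Z y z : sum_span Z (y :: z) = sum_span (sum_span Z [:: y]) z.
Proof.
apply/funext => x; apply/propext; split=> [[c hc]|[d [e he]]].
  exists (fun i => c i.+1); exists c.
  by move: hc; rewrite lcomb_seq1 lcomb_cons opprD addrA addrAC.
exists (fun i => if i is i'.+1 then d i' else e 0%N).
by move: he; rewrite lcomb_seq1 lcomb_cons opprD addrA addrAC.
Qed.

Lemma sum_span_sub X Z s : subspace X -> Z `<=` X ->
  (forall i, (i < size s)%N -> X s`_i) -> sum_span Z s `<=` X.
Proof.
move=> hX hZX hs x [c hc]; rewrite -(subrK (lcomb c s) x).
by case: (hX) => _ XD _; apply: XD; [apply: hZX|apply: subspace_lcomb].
Qed.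

Lemma indep_mod0 Z s : subspace Z -> indep_mod Z s -> indep_mod [set 0] s.
Proof. by case=> Z0 _ _ h c hc; apply: h; rewrite hc. Qed.

Lemma indep_mod_cons Z s y : subspace Z -> indep_mod Z s -> ~ sum_span Z s y ->
  indep_mod Z (y :: s).
Proof.
move=> hZ hs hy c; rewrite lcomb_cons => hc.
have [c0|c0] := eqVneq (c 0%N) 0.
  move: hc; rewrite c0 scale0r add0r => /hs hc'.
  by case=> [|i] //= hi; apply: hc'.
exfalso; apply: hy; exists (fun i => - ((c 0%N)^-1 * c i.+1)).
rewrite -lcombN opprK -lcombZ.
case: hZ => _ _ ZZ; have := ZZ (c 0%N)^-1 _ hc.
by rewrite scalerDr scalerA mulVf // scale1r.
Qed.

(* Greedy completion: adding vectors of Y outside the current span must stop,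
   since by Steinitz an independent family in k<s> has at most size s terms. *)
Lemma complete_basis Z Y s : subspace Z -> subspace Y -> Z `<=` Y -> Y `<=` lspan s ->
  exists z, [/\ indep_mod Z z, (forall i, (i < size z)%N -> Y z`_i) & sum_span Z z = Y].
Proof.
move=> hZ hY hZY hYs.
suff H n z : (size s - size z < n)%N -> indep_mod Z z ->
    (forall i, (i < size z)%N -> Y z`_i) ->
    exists z, [/\ indep_mod Z z, (forall i, (i < size z)%N -> Y z`_i) & sum_span Z z = Y].
  by apply: (H (size s).+1 [::]) => //; rewrite subn0.
elim: n z => [|n IH] z hn hz hzY; first by rewrite ltn0 in hn.
have [Ysub|/existsNP [y /not_implyP [hy hny]]] := pselect (Y `<=` sum_span Z z).
  by exists z; split=> //; apply/seteqP; split=> //; apply: sum_span_sub.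
have hz' := indep_mod_cons hZ hz hny.
have hzY' : forall i, (i < size (y :: z))%N -> Y (y :: z)`_i by case=> [|i] //= /hzY.
have /= := size_indep_le (indep_mod0 hZ hz') (fun j hj => hYs _ (hzY' j hj)).
by move=> hsz; apply: (IH (y :: z)) => //=; lia.
Qed.

Lemma has_dimE X n :
  has_dim X n <-> exists b, [/\ size b = n, indep_mod [set 0] b & lspan b = X].
Proof.
by split=> [[b [h1 /lin_indepE h2 h3]]|[b [h1 /lin_indepE h2 h3]]];
  exists b; rewrite ?kspanE in h3 *.
Qed.

Lemma has_dim_uniq X n m : has_dim X n -> has_dim X m -> n = m.
Proof.
move=> /has_dimE [b [<- hb eb]] /has_dimE [b' [<- hb' eb']].
by apply/eqP; rewrite eqn_leq; apply/andP; split; apply: size_indep_le => // j hj;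
  [rewrite eb' -eb|rewrite eb -eb']; apply: lspan_nth.
Qed.

Lemma vdim_has_dim X n : has_dim X n -> vdim X = n.
Proof. by move=> h; apply: (has_dim_uniq _ h); apply: (xgetPex 0%N); exists n. Qed.

Lemma has_dim_sub_lspan Y s : subspace Y -> Y `<=` lspan s ->
  exists2 n, has_dim Y n & (n <= size s)%N.
Proof.
move=> hY hYs; have [hY0 _ _] := hY.
have Y0 : [set 0] `<=` Y by move=> x ->.
have [z [hz hzY ez]] := complete_basis subspace0 hY Y0 hYs.
exists (size z); first by apply/has_dimE; exists z; rewrite -sum_span0.
by apply: size_indep_le => // j hj; exact/hYs/hzY.
Qed.

Lemma has_dim_lspan s : has_dim (lspan s) (vdim (lspan s)).
Proof.
by have [n hn _] := has_dim_sub_lspan (subspace_lspan s) (@subset_refl _ _);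
  rewrite (vdim_has_dim hn).
Qed.

Lemma vdim_sub_lspan s t : lspan s `<=` lspan t -> (vdim (lspan s) <= size t)%N.
Proof.
by move=> st; have [n hn] := has_dim_sub_lspan (subspace_lspan s) st;
  rewrite (vdim_has_dim hn).
Qed.

Lemma vdim_lspan_subset s t : lspan s `<=` lspan t ->
  (vdim (lspan s) <= vdim (lspan t))%N.
Proof.
move=> st; have /has_dimE [b [<- _ eb]] := has_dim_lspan t.
by apply: vdim_sub_lspan; rewrite eb.
Qed.

Lemma has_dim_sum_span1 Z n y : has_dim Z n -> ~ Z y ->
  has_dim (sum_span Z [:: y]) n.+1.
Proof.
move=> /has_dimE [b [hb ib eb]] hy; apply/has_dimE; exists (y :: b); split.
- by rewrite /= hb.
- by apply: indep_mod_cons subspace0 ib _; rewrite sum_span0 eb.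
- apply/funext => x; apply/propext; rewrite -eb; split=> [[c ->]|[e [d hd]]].
    exists (fun=> c 0%N); rewrite lcomb_cons lcomb_seq1 addrC addKr.
    by exists (fun i => c i.+1).
  exists (fun i => if i is i'.+1 then d i' else e 0%N).
  by rewrite lcomb_cons /= -hd lcomb_seq1 addrC subrK.
Qed.

Lemma has_dim_sum_span Z n z : subspace Z -> has_dim Z n -> indep_mod Z z ->
  has_dim (sum_span Z z) (n + size z)%N.
Proof.
elim: z Z n => [|y z IH] Z n hZ hd hi; first by rewrite sum_span_nil addn0.
rewrite sum_span_cons /= addnS -addSn; apply: IH.
- exact: subspace_sum_span.
- apply: has_dim_sum_span1 => // hy.
  have := hi (fun i => (i == 0%N)%:R); rewrite lcomb_cons /= scale1r.
  rewrite (_ : lcomb _ z = 0) ?addr0; last by rewrite -(lcomb0 z); apply: eq_lcomb.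
  by move=> /(_ hy 0%N isT) /eqP; rewrite oner_eq0.
- move=> d [e he] i hi'.
  have := hi (fun i => if i is i'.+1 then d i' else - e 0%N).
  rewrite lcomb_cons /= scaleNr addrC; move: he; rewrite lcomb_seq1.
  by move=> he /(_ he i.+1 hi').
Qed.

End LinearAlgebra.

Section Algebra.
Variables (K : numFieldType) (V : completeNormedModType K) (M : comBanachAlg V).
Local Notation mul := (bmul M).
Local Notation one := (bone M).
Implicit Types (A B : seq V) (X Y : set V).

Lemma bmulr1 x : mul x one = x.
Proof. by rewrite bmulC bmul1. Qed.

Lemma bmulDr x y z : mul x (y + z) = mul x y + mul x z.
Proof. by rewrite bmulC bmulDl !(bmulC M _ x). Qed.

Lemma bmulZr (a : K) x y : mul x (a *: y) = a *: mul x y.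
Proof. by rewrite bmulC bmulZl bmulC. Qed.

Lemma bmul0l x : mul 0 x = 0.
Proof. by have := bmulZl M 0 0 x; rewrite !scale0r. Qed.

Lemma bmul0r x : mul x 0 = 0.
Proof. by rewrite bmulC bmul0l. Qed.

Lemma bmulACA a b c d : mul (mul a b) (mul c d) = mul (mul a c) (mul b d).
Proof. by rewrite -bmulA (bmulA M b c d) (bmulC M b c) -bmulA bmulA. Qed.

Lemma bmul_lcombr x c s : mul x (lcomb c s) = lcomb c (map (mul x) s).
Proof. by apply: lcomb_map => *; rewrite ?bmulDr ?bmulZr. Qed.

Lemma bmul_lcombl x c s : mul (lcomb c s) x = lcomb c (map (mul^~ x) s).
Proof. by apply: lcomb_map => *; rewrite ?bmulDl ?bmulZl. Qed.

Lemma lspan_prodset_mul A B x y :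
  lspan A x -> lspan B y -> lspan (prodset M A B) (mul x y).
Proof.
move=> [c ->] [d ->]; rewrite bmul_lcombl; apply: subspace_lcomb => [|i].
  exact: subspace_lspan.
rewrite size_map => hi; rewrite (nth_map 0) // bmul_lcombr.
apply: subspace_lcomb => [|j]; first exact: subspace_lspan.
rewrite size_map => hj; rewrite (nth_map 0) //.
by apply/lspan_mem/allpairs_f; apply: mem_nth.
Qed.

Lemma lspan_prodset_sub A B X : subspace X ->
  (forall a b, a \in A -> b \in B -> X (mul a b)) -> lspan (prodset M A B) `<=` X.
Proof.
move=> hX h; apply: lspan_sub => // i hi.
by have /allpairsP [[a b] [/= ha hb ->]] := mem_nth 0 hi; apply: h.
Qed.

Lemma vdim_lspan_map_unit w w' s : mul w w' = one ->
  vdim (lspan (map (mul w) s)) = vdim (lspan s).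
Proof.
move=> hw; have [b [hb ib eb]] := (has_dimE _ _).1 (has_dim_lspan s).
have fD x y : mul w (x + y) = mul w x + mul w y by rewrite bmulDr.
have fZ (a : K) x : mul w (a *: x) = a *: mul w x by rewrite bmulZr.
apply: vdim_has_dim; apply/has_dimE; exists (map (mul w) b); split.
- by rewrite size_map.
- move=> c; rewrite /= -lcomb_map // => hc i; rewrite size_map; apply: ib.
  by rewrite -[lcomb c b](bmul1 M) -hw (bmulC M w) -bmulA hc bmul0r.
- by apply/funext => x; apply/propext; rewrite !lspan_map // eb.
Qed.

Lemma subspace_mul_preimage a X Y : subspace X -> subspace Y ->
  subspace [set y | Y y /\ X (mul a y)].
Proof.
case=> X0 XD XZ [Y0 YD YZ]; split.
- by split; rewrite ?bmul0r.
- by move=> x y [? ?] [? ?]; split; [apply: YD|rewrite bmulDr; apply: XD].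
- by move=> c x [? ?]; split; [apply: YZ|rewrite bmulZr; apply: XZ].
Qed.

Lemma extension_step A B a y :
  lspan A one -> lspan B one -> lspan A a -> lspan B y -> ~ lspan A (mul a y) ->
  exists A' B', [/\ lspan A' one, lspan B' one,
    (vdim (lspan B') < vdim (lspan B))%N,
    (vdim (lspan A') + vdim (lspan B') = vdim (lspan A) + vdim (lspan B))%N &
    lspan (prodset M A' B') `<=` lspan (prodset M A B)].
Proof.
move=> hA hB ha hy hay.
pose Y' := [set y | lspan B y /\ lspan A (mul a y)].
have sX : subspace (lspan A) := subspace_lspan A.
have sY' : subspace Y' := subspace_mul_preimage a sX (subspace_lspan B).
have Y'Y : Y' `<=` lspan B by move=> ? [].
have [z [hz hzY ez]] := complete_basis sY' (subspace_lspan B) Y'Y (@subset_refl _ _).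
have [n' hdY' _] := has_dim_sub_lspan sY' Y'Y.
have hdY : has_dim (lspan B) (n' + size z)%N by rewrite -ez; exact: has_dim_sum_span.
have z_gt0 : (0 < size z)%N.
  case: z {hz hzY hdY} ez => //; rewrite sum_span_nil => eY.
  by have [] : Y' y by rewrite eY.
have haz : indep_mod (lspan A) (map (mul a) z).
  move=> c; rewrite -bmul_lcombr size_map => hc i; apply: hz.
  by split=> //; exact: subspace_lcomb (subspace_lspan B) hzY.
have := has_dim_sum_span sX (has_dim_lspan A) haz; rewrite size_map.
move=> /has_dimE [A' [hA' _ eA']].
have /has_dimE [B' [hB' _ eB']] := hdY'.
exists A', B'; rewrite eA' eB' (vdim_has_dim hdY') (vdim_has_dim hdY).
rewrite (vdim_has_dim (has_dim_sum_span sX (has_dim_lspan A) haz)) size_map.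
split; [exact: sum_span_ge hA|by split; rewrite ?bmulr1|by rewrite -{1}[n']addn0 ltn_add2l|by rewrite (addnC n') addnA|].
apply: lspan_prodset_sub => [|a' b']; first exact: subspace_lspan.
move=> /lspan_mem; rewrite eA' => -[c hc] /lspan_mem; rewrite eB' => -[hYb hXab].
rewrite -(subrK (lcomb c (map (mul a) z)) a') bmulDl.
have [_ PD _] := subspace_lspan (prodset M A B); apply: PD; first exact: lspan_prodset_mul.
rewrite -bmul_lcombr -bmulA (bmulC M (lcomb c z)) bmulA.
exact: lspan_prodset_mul hXab (subspace_lcomb c (subspace_lspan B) hzY).
Qed.

Lemma stable_lspan_sub_scalars (hfd : only_fd_subalg_is_k M) A Y :
  lspan A one -> (forall a y, lspan A a -> Y y -> lspan A (mul a y)) ->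
  Y `<=` lspan [:: one].
Proof.
move=> hA hstab; set X := lspan A; have [X0 XD XZ] := subspace_lspan A.
pose H := [set h | forall x, X x -> X (mul h x)].
have subH : subalgebra M H.
  split=> [x|h g hh hg x|c h hh x|h g hh hg x] hx.
  - by rewrite bmul1.
  - by rewrite bmulDl; apply: XD; [apply: hh|apply: hg].
  - by rewrite bmulZl; apply: XZ; apply: hh.
  - by rewrite -bmulA; apply/hh/hg.
have sH : subspace H.
  by have [_ HD HZ _] := subH; split=> // x hx; rewrite bmul0l.
have HX : H `<=` X by move=> h hh; rewrite -(bmulr1 h); exact: hh.
have [n /has_dimE [b [_ _ eb]] _] := has_dim_sub_lspan sH HX.
rewrite -kspanE -(hfd H subH); last by exists b; rewrite kspanE.
by move=> y hy x hx; rewrite bmulC; exact: hstab.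
Qed.

Lemma dim_prodset_one (hfd : only_fd_subalg_is_k M) A B :
  lspan A one -> lspan B one ->
  (vdim (lspan A) + vdim (lspan B) <= vdim (lspan (prodset M A B)) + 1)%N.
Proof.
have [n] := ubnP (vdim (lspan B)); elim: n A B => // n IH A B ltBn hA hB.
have [[a [y [ha hy hay]]]|hstable] :=
  pselect (exists a y, [/\ lspan A a, lspan B y & ~ lspan A (mul a y)]).
  have [A' [B' [hA' hB' ltB edim sub]]] := extension_step hA hB ha hy hay.
  have := IH A' B' (leq_trans ltB ltBn) hA' hB'.
  by have := vdim_lspan_subset sub; lia.
have YK : lspan B `<=` lspan [:: one].
  apply: stable_lspan_sub_scalars hA _ => // a' y' ha' hy'.
  by apply: contrapT => hn; apply: hstable; exists a', y'.
have XP : lspan A `<=` lspan (prodset M A B).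
  by move=> x hx; rewrite -(bmulr1 x); exact: lspan_prodset_mul.
by have := vdim_sub_lspan YK; have := vdim_lspan_subset XP; rewrite /=; lia.
Qed.

Lemma dim_prodset_unit (hfd : only_fd_subalg_is_k M) A B :
  (exists u, kspan A u /\ is_unit M u) -> (exists v, kspan B v /\ is_unit M v) ->
  (dimk A + dimk B <= dimk (prodset M A B) + 1)%N.
Proof.
move=> [u [hu [u' hu']]] [v [hv [v' hv']]]; rewrite /dimk !kspanE.
have hu'u : mul u' u = one by rewrite bmulC.
have hv'v : mul v' v = one by rewrite bmulC.
have huv : mul (mul u' v') (mul u v) = one by rewrite bmulACA hu'u hv'v bmul1.
rewrite -(vdim_lspan_map_unit A hu'u) -(vdim_lspan_map_unit B hv'v).
rewrite -(vdim_lspan_map_unit (prodset M A B) huv).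
have -> : map (mul (mul u' v')) (prodset M A B) =
          prodset M (map (mul u') A) (map (mul v') B).
  rewrite /prodset allpairs_mapl allpairs_mapr map_allpairs.
  by apply: eq_allpairs => a b; rewrite bmulACA.
apply: dim_prodset_one => //.
- by move: hu; rewrite kspanE => -[c hc]; exists c; rewrite -hu'u hc bmul_lcombr.
- by move: hv; rewrite kspanE => -[c hc]; exists c; rewrite -hv'v hc bmul_lcombr.
Qed.

End Algebra.

Theorem corollary4p3 (R : realType) :
  (forall (V : completeNormedModType R) (M : comBanachAlg V),
     only_fd_subalg_is_k M ->
     forall A B : seq V,
       (exists u, kspan A u /\ is_unit M u) -> (exists v, kspan B v /\ is_unit M v) ->
       (dimk A + dimk B <= dimk (prodset M A B) + 1)%N) /\
  (forall (V : completeNormedModType R[i]) (M : comBanachAlg V),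
     only_fd_subalg_is_k M ->
     forall A B : seq V,
       (exists u, kspan A u /\ is_unit M u) -> (exists v, kspan B v /\ is_unit M v) ->
       (dimk A + dimk B <= dimk (prodset M A B) + 1)%N).
Proof. by split=> V M hfd A B; apply: dim_prodset_unit. Qed.
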